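(* Let $\Omega$ be a topological space. Suppose either (a) $\mathcal{A}$ is an algebra of continuous real-valued functions on $\Omega$, closed in the compact-open topology and containing all constants; or (b) $\mathcal{B}$ is a complex algebra of continuous complex-valued functions on $\Omega$, closed in the compact-open topology and containing all constants, and $\mathcal{A}=\{\mathrm{Re}\,b\mid b\in\mathcal{B}\}$. Let $\mathcal{F}$ be the complete lattice cone generated by $\mathcal{A}$. Then for every compact $K\subset\Omega$ and every $C\geq1$, $$\mathrm{clConv}_{\mathcal{F}}K=\{\omega\in\Omega\mid a(\omega)\leq C\sup_K|a|\text{ for all }a\in\mathcal{A}\}.$$ Moreover, in case (b) these sets also coincide with $\{\omega\in\Omega\mid |b(\omega)|\leq C\sup_K|b|\text{ for all }b\in\mathcal{B}\}$.
   Context: The complete lattice cone generated by $\mathcal{A}$ is the smallest set of functions $\Omega\to(-\infty,\infty]$ containing $\mathcal{A}$, closed under nonnegative linear combinations and pointwise suprema of arbitrary families. $\mathrm{clConv}_{\mathcal{F}}K=\{\omega\in\Omega\mid f(\omega)\leq\sup f(K)\text{ for all }f\in\mathcal{F}\}$. The compact-open topology is given by the seminorms $\sup_K|\cdot|$, $K$ compact. *)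

From HB Require Import structures.
From mathcomp Require Import all_boot all_order all_algebra.
From mathcomp Require Import all_classical all_reals all_analysis.
From mathcomp Require Import complex.
Export numFieldTopology.Exports numFieldNormedType.Exports.
Import Order.TTheory GRing.Theory Num.Theory.

Set Implicit Arguments.
Unset Strict Implicit.
Unset Printing Implicit Defensive.

Local Open Scope classical_set_scope.
Local Open Scope ring_scope.

Definition cplx (R : realType) : numClosedFieldType := R[i].

Definition cmod (R : realType) (z : cplx R) : R := ComplexField.Normc.normc z.

Definition closed_real_function_algebra (R : realType) (Omega : topologicalType)
  (A : set (Omega -> R)) : Prop :=
  (forall a, A a -> continuous a) /\
  (forall c : R, A (fun _ => c)) /\
  (forall a b, A a -> A b -> A (fun w => a w + b w)) /\
  (forall a b, A a -> A b -> A (fun w => a w * b w)) /\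
  (forall (c : R) a, A a -> A (fun w => c * a w)) /\
      (* closed for the compact-open topology (seminorms sup_K |.|) *)
      (forall f : Omega -> R, continuous f ->
         (forall K, compact K -> forall eps : R, 0 < eps ->
            exists2 a, A a & forall x, K x -> `|f x - a x| < eps) ->
         A f).

Definition closed_complex_function_algebra (R : realType) (Omega : topologicalType)
  (B : set (Omega -> cplx R)) : Prop :=
  (forall b, B b -> continuous b) /\
  (forall c : cplx R, B (fun _ => c)) /\
  (forall a b, B a -> B b -> B (fun w => a w + b w)) /\
  (forall a b, B a -> B b -> B (fun w => a w * b w)) /\
  (forall (c : cplx R) a, B a -> B (fun w => c * a w)) /\
      (forall f : Omega -> cplx R, continuous f ->
         (forall K, compact K -> forall eps : R, 0 < eps ->
            exists2 a, B a & forall x, K x -> cmod (f x - a x) < eps) ->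
         B f).

Definition real_parts (R : realType) (Omega : Type) (B : set (Omega -> cplx R))
  : set (Omega -> R) :=
  [set fun w => complex.Re (b w) | b in B].

Local Open Scope ereal_scope.

Definition lattice_cone_closed (R : realType) (Omega : Type)
  (S : set (Omega -> \bar R)) : Prop :=
  [/\ (forall f g, S f -> S g -> S (fun w => f w + g w)),
      (forall (c : R) f, (0 <= c)%R -> S f -> S (fun w => c%:E * f w)) &
      (forall G : set (Omega -> \bar R), G !=set0 -> G `<=` S ->
         S (fun w => ereal_sup [set g w | g in G]))].

Definition complete_lattice_cone (R : realType) (Omega : Type)
  (A : set (Omega -> R)) : set (Omega -> \bar R) :=
  [set f | forall S : set (Omega -> \bar R),
     (forall w, S w -> forall x, w x != -oo) ->
     (forall a, A a -> S (fun w => (a w)%:E)) ->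
     lattice_cone_closed S -> S f].

Definition clConv (R : realType) (Omega : Type) (F : set (Omega -> \bar R))
  (K : set Omega) : set Omega :=
  [set w | forall f, F f -> f w <= ereal_sup (f @` K)].

Definition supnorm_on (R : realType) (Omega : Type) (K : set Omega)
  (a : Omega -> R) : \bar R :=
  ereal_sup [set `|a x|%:E | x in K].

Definition csupnorm_on (R : realType) (Omega : Type) (K : set Omega)
  (b : Omega -> cplx R) : \bar R :=
  ereal_sup [set (cmod (b x))%:E | x in K].

(* A point [w] lies in [clConv_F K] as soon as it lies in the [A]-convex hull of
   [K], i.e. [a w <= sup_K a] for all [a] in [A]: by induction over the lattice
   cone, every real below an element [g] of [F] at [w] is exceeded at [w] by some
   [a] in [A] lying below [g] on [K].  Conversely the hull is reached from the
   estimate [|b w| <= C sup_K |b|]: applied to the powers [b ^+ n] it improves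
   to [C = 1] since [C ^ (1/n) -> 1]; in the real case it is then applied to
   [a + M], nonnegative on [K], and in the complex case to [(b + t) ^+ 2], which
   bounds [Re b w] by [sup_K Re b] up to an error [sup_K |b| ^+ 2 / 2 t] that
   vanishes as [t -> +oo].  Rotating [b] by a unimodular constant converts bounds
   on real parts into bounds on moduli. *)

From HB Require Import structures.
From mathcomp Require Import all_boot all_order all_algebra.
From mathcomp Require Import all_classical all_reals all_analysis.
From mathcomp Require Import complex.
From mathcomp Require Import ring lra.
Import numFieldTopology.Exports numFieldNormedType.Exports.
Import Order.TTheory GRing.Theory Num.Theory.
Set Implicit Arguments.
Unset Strict Implicit.
Local Open Scope classical_set_scope.
Local Open Scope ring_scope.

Lemma bernoulli_ineq (R : realType) (q : R) (n : nat) : 1 <= q ->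
  1 + n%:R * (q - 1) <= q ^+ n.
Proof.
move=> q_ge1; elim: n => [|n IHn]; first by rewrite mul0r addr0 expr0.
have q_ge0 : 0 <= q by rewrite (le_trans _ q_ge1).
have : q * (1 + n%:R * (q - 1)) <= q ^+ n.+1 by rewrite exprS ler_wpM2l.
have : 0 <= n%:R * (q - 1) * (q - 1) :> R by rewrite !mulr_ge0 ?subr_ge0.
rewrite -natr1; nra.
Qed.

Lemma le_of_exprn_le (R : realType) (x s C : R) : 0 <= x -> 0 <= s ->
  (forall n, x ^+ n.+1 <= C * s ^+ n.+1) -> x <= s.
Proof.
move=> x_ge0 s_ge0 xs; rewrite leNgt; apply/negP => s_lt_x.
have [s0|s_neq0] := eqVneq s 0.
  by move: (xs 0%N) s_lt_x; rewrite s0 !expr1 mulr0 leNgt => /negP.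
have s_gt0 : 0 < s by rewrite lt_neqAle eq_sym s_neq0.
have q_gt1 : 1 < x / s by rewrite ltr_pdivlMr // mul1r.
have q_le_C n : (x / s) ^+ n.+1 <= C.
  by rewrite expr_div_n ler_pdivrMr ?exprn_gt0.
(* By Bernoulli, [(x / s) ^+ m.+1 > C] once [m.+1 * (x / s - 1) > C]. *)
pose m := Num.truncn (C / (x / s - 1)).
have := truncnS_gt (C / (x / s - 1)); rewrite -/m ltr_pdivrMr ?subr_gt0 // => m_big.
have := bernoulli_ineq m.+1 (ltW q_gt1); have := q_le_C m; lra.
Qed.

(* [N (b w) <= C * sup_K N b], with the supremum replaced by its real upper
   bounds [v]. *)
Definition sup_dominated (R : realType) (T V : Type) (N : V -> R)
    (B : set (T -> V)) (K : set T) (C : R) (w : T) : Prop :=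
  forall b, B b -> forall v, (forall x, K x -> N (b x) <= v) -> N (b w) <= C * v.

Section PowerTrick.
Variables (R : realType) (T : Type) (V : comNzRingType) (N : V -> R).
Hypotheses (N_ge0 : forall z, 0 <= N z) (N1 : N 1 = 1)
  (NX : forall n z, N (z ^+ n) = N z ^+ n).
Variable B : set (T -> V).
Hypotheses (B1 : B (fun _ => 1))
  (BM : forall a b, B a -> B b -> B (fun x => a x * b x)).

Lemma exprn_closed b n : B b -> B (fun x => b x ^+ n).
Proof.
move=> Bb; elim: n => [|n IHn].
  by under eq_fun do rewrite expr0.
by under eq_fun do rewrite exprS; exact: BM.
Qed.

Lemma sup_dominated_nonempty K C w : sup_dominated N B K C w -> K !=set0.
Proof.
move=> dom; apply/set0P/eqP => K0.
have : N 1 <= C * 0 by apply: (dom _ B1) => x; rewrite K0.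
by rewrite N1 mulr0 ler10.
Qed.

Lemma sup_dominated1 K C w : sup_dominated N B K C w -> sup_dominated N B K 1 w.
Proof.
move=> dom b Bb v bv; rewrite mul1r.
have [x0 Kx0] := sup_dominated_nonempty dom.
apply: le_of_exprn_le (N_ge0 _) (le_trans (N_ge0 _) (bv _ Kx0)) _ => n.
rewrite -NX; apply: dom (exprn_closed n.+1 Bb) _ _ => x Kx.
by rewrite NX lerXn2r ?nnegrE ?N_ge0 ?bv // (le_trans (N_ge0 _) (bv _ Kx)).
Qed.

End PowerTrick.

Local Open Scope ereal_scope.

Lemma lte_adde_split (R : realType) (x y : \bar R) (r : R) :
  x != -oo -> y != -oo -> r%:E < x + y ->
  exists r1 r2 : R, [/\ r1%:E < x, r2%:E < y & r = (r1 + r2)%R].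
Proof.
case: x => [a| |] // _; case: y => [b| |] // _ /=.
- rewrite -EFinD lte_fin => h.
  exists (a - (a + b - r) / 2)%R, (b - (a + b - r) / 2)%R; split;
    rewrite ?lte_fin; lra.
- move=> _; exists (a - 1)%R, (r - a + 1)%R; split; rewrite ?lte_fin ?ltry //; lra.
- move=> _; exists (r - b + 1)%R, (b - 1)%R; split; rewrite ?lte_fin ?ltry //; lra.
- move=> _; exists 0%R, r; split; rewrite ?ltry //; lra.
Qed.

Lemma lee_EFin_approx (R : realType) (x y : \bar R) :
  (forall r : R, r%:E < x -> r%:E <= y) -> x <= y.
Proof.
move=> xy; rewrite leNgt; apply/negP => yx.
have [r [y_r r_x]] : exists r : R, y < r%:E /\ r%:E < x.
  move: yx; case: x {xy} => [a| |]; case: y => [b| |] //= yx.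
  - by exists ((a + b) / 2)%R; rewrite !lte_fin; move: yx; rewrite lte_fin; lra.
  - by exists (a - 1)%R; rewrite !lte_fin ltNye; split => //; lra.
  - by exists (b + 1)%R; rewrite lte_fin ltry; split => //; lra.
  - by exists 0%R; rewrite ltNye ltry.
by have := xy _ r_x; rewrite leNgt y_r.
Qed.

Definition Aconvex_hull (R : realType) (T : Type) (A : set (T -> R)) (K : set T)
  : set T :=
  [set w | forall a, A a ->
     forall u : R, (forall x, K x -> a x <= u)%R -> (a w <= u)%R].

(* The invariant of the induction over the complete lattice cone. *)
Definition hull_approximable (R : realType) (T : Type) (A : set (T -> R))
    (K : set T) (w : T) : set (T -> \bar R) :=
  [set g | (forall x, g x != -oo) /\ forall r : R, r%:E < g w ->
     exists a, [/\ A a, forall x, K x -> (a x)%:E <= g x & (r < a w)%R]].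

Section LatticeConeHull.
Variables (R : realType) (T : Type) (A : set (T -> R)) (K : set T) (w : T).
Hypotheses (A0 : A (fun _ => 0%R))
  (AD : forall a b, A a -> A b -> A (fun x => a x + b x)%R)
  (AZ : forall (c : R) a, (0 < c)%R -> A a -> A (fun x => c * a x)%R).

Local Notation S := (hull_approximable A K w).

Lemma approximable_EFin a : A a -> S (fun x => (a x)%:E).
Proof. by move=> Aa; split=> // r r_a; exists a. Qed.

Lemma approximable_add f g : S f -> S g -> S (fun x => f x + g x).
Proof.
move=> [fN f_app] [gN g_app]; split=> [x|r].
  by rewrite adde_eq_ninfty negb_or fN gN.
move=> /(lte_adde_split (fN w) (gN w)) [r1 [r2 [r1f r2g ->]]].
have [a [Aa a_f r1a]] := f_app _ r1f; have [b [Ab b_g r2b]] := g_app _ r2g.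
exists (fun x => a x + b x)%R; split; [exact: AD | | exact: ltrD].
by move=> x Kx; rewrite EFinD leeD ?a_f ?b_g.
Qed.

Lemma approximable_scale (c : R) f : (0 <= c)%R -> S f -> S (fun x => c%:E * f x).
Proof.
move=> c_ge0 [fN f_app]; have [->|c_neq0] := eqVneq c 0%R.
  split=> [x|r]; rewrite mul0e // lte_fin => r_lt0.
  by exists (fun=> 0%R); split=> // x _; rewrite mul0e.
have c_gt0 : (0 < c)%R by rewrite lt_neqAle eq_sym c_neq0.
split=> [x|r r_cf].
  by case: (f x) (fN x) => [y| |] //= _; rewrite mulr_infty gtr0_sg // mul1e.
have : (r / c)%:E < f w.
  move: r_cf (fN w); case: (f w) => [y| |] //= r_cy _; last exact: ltry.
  by move: r_cy; rewrite -EFinM !lte_fin ltr_pdivrMr // mulrC.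
move=> /f_app [a [Aa a_f rc_a]]; exists (fun x => c * a x)%R; split.
- exact: AZ.
- by move=> x Kx; rewrite EFinM lee_pmul2l ?lte_fin // a_f.
- by move: rc_a; rewrite ltr_pdivrMr // mulrC.
Qed.

Lemma approximable_sup (G : set (T -> \bar R)) : G !=set0 -> G `<=` S ->
  S (fun x => ereal_sup [set g x | g in G]).
Proof.
move=> [g0 Gg0] GS; split=> [x|r].
  apply: contraTneq (proj1 (GS _ Gg0) x) => sup_Ny; apply/negPn/eqP.
  by apply/eqP; rewrite -leeNy_eq -sup_Ny; apply: ereal_sup_ubound; exists g0.
move=> /ereal_sup_gt [_ [g Gg <-]] r_g.
have [a [Aa a_g r_a]] := (GS _ Gg).2 _ r_g; exists a; split=> // x Kx.
by apply: le_trans (a_g _ Kx) _; apply: ereal_sup_ubound; exists g.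
Qed.

Lemma lattice_cone_closed_approximable : lattice_cone_closed S.
Proof.
split; [exact: approximable_add | exact: approximable_scale | exact: approximable_sup].
Qed.

Lemma Aconvex_hull_sub_clConv :
  Aconvex_hull A K w -> clConv (complete_lattice_cone A) K w.
Proof.
move=> w_hull f /(_ S) f_cone.
have [_ f_app] := f_cone (fun g (Sg : S g) => Sg.1) approximable_EFin
  lattice_cone_closed_approximable.
apply: lee_EFin_approx => r /f_app [a [Aa a_f r_a]].
rewrite leNgt; apply/negP => sup_lt_r.
have : (a w <= r)%R.
  apply: w_hull => // x Kx; rewrite -lee_fin; apply/ltW/(le_lt_trans _ sup_lt_r).
  by apply: le_trans (a_f _ Kx) _; apply: ereal_sup_ubound; exists x.
by rewrite leNgt r_a.
Qed.

End LatticeConeHull.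

Lemma complete_lattice_cone_EFin (R : realType) (T : Type) (A : set (T -> R)) a :
  A a -> complete_lattice_cone A (fun x => (a x)%:E).
Proof. by move=> Aa S _ AS _; exact: AS. Qed.

Lemma clConv_nonempty (R : realType) (T : Type) (A : set (T -> R)) K w :
  A (fun _ => 0%R) -> clConv (complete_lattice_cone A) K w -> K !=set0.
Proof.
move=> A0 /(_ _ (complete_lattice_cone_EFin A0)) w_le; apply/set0P/eqP => K0.
by move: w_le; rewrite K0 image_set0 ereal_sup0 leeNy_eq.
Qed.

Lemma clConv_le_mul_sup (R : realType) (T : Type) (A : set (T -> R)) K (C : R) w
    a (f : T -> R) :
  A (fun _ => 0%R) -> (1 <= C)%R -> clConv (complete_lattice_cone A) K w -> A a ->
  (forall x, K x -> a x <= f x)%R -> (forall x, 0 <= f x)%R ->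
  (a w)%:E <= C%:E * ereal_sup [set (f x)%:E | x in K].
Proof.
move=> A0 C_ge1 w_conv Aa a_f f_ge0.
have [x0 Kx0] := clConv_nonempty A0 w_conv.
have a_sup : ereal_sup [set (a x)%:E | x in K] <= ereal_sup [set (f x)%:E | x in K].
  apply: ge_ereal_sup => _ [x Kx <-]; apply: (@le_trans _ _ (f x)%:E).
    by rewrite lee_fin a_f.
  by apply: ereal_sup_ubound; exists x.
apply: le_trans (w_conv _ (complete_lattice_cone_EFin Aa)) _.
apply: le_trans a_sup _; apply: lee_pemull; last by rewrite lee_fin.
apply: (@le_trans _ _ (f x0)%:E); first by rewrite lee_fin.
by apply: ereal_sup_ubound; exists x0.
Qed.

Lemma le_mul_sup_EFin (R : realType) (T : Type) (K : set T) (f : T -> R) (y C v : R) :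
  (0 <= C)%R -> y%:E <= C%:E * ereal_sup [set (f x)%:E | x in K] ->
  (forall x, K x -> f x <= v)%R -> (y <= C * v)%R.
Proof.
move=> C_ge0 y_le f_le; rewrite -lee_fin EFinM; apply: le_trans y_le _.
by apply: lee_wpmul2l; rewrite ?lee_fin //; apply: ge_ereal_sup => _ [x Kx <-];
  rewrite lee_fin f_le.
Qed.

Local Close Scope ereal_scope.

Lemma continuous_bounded_on_compact (R : realType) (T : topologicalType)
    (f : T -> R) (K : set T) :
  continuous f -> compact K -> exists M : R, forall x, K x -> `|f x| <= M.
Proof.
move=> f_cont K_compact.
have /compact_bounded [M [_ M_bound]] :=
  continuous_compact (continuous_subspaceT f_cont) K_compact.
exists (M + 1) => x Kx; apply: (M_bound (M + 1)); first by rewrite ltrDl.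
by exists x.
Qed.

Section RealAlgebra.
Variables (R : realType) (T : topologicalType) (A : set (T -> R)).
Hypotheses (A_cont : forall a, A a -> continuous a)
  (Acst : forall c : R, A (fun _ => c))
  (AD : forall a b, A a -> A b -> A (fun x => a x + b x)).

Lemma Aconvex_hull_of_sup_dominated1 (K : set T) w : compact K ->
  sup_dominated Num.norm A K 1 w -> Aconvex_hull A K w.
Proof.
move=> K_compact dom a Aa u a_le_u.
have [M a_le_M] := continuous_bounded_on_compact (A_cont Aa) K_compact.
suff : `|a w + M| <= 1 * (u + M) by rewrite mul1r => /(le_trans (ler_norm _)); lra.
apply: (dom _ (AD Aa (Acst M))) => x Kx /=.
have := a_le_M _ Kx; have := a_le_u _ Kx; rewrite ler_norml => ? /andP[? _].
by rewrite ger0_norm; lra.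
Qed.

End RealAlgebra.

Lemma clConv_real_function_algebra (R : realType) (T : topologicalType)
    (A : set (T -> R)) :
  closed_real_function_algebra A ->
  forall (K : set T) (C : R), compact K -> 1 <= C ->
  clConv (complete_lattice_cone A) K =
  [set w | forall a, A a -> ((a w)%:E <= C%:E * supnorm_on K a)%E].
Proof.
move=> [A_cont [Acst [AD [AM [AZ _]]]]] K C K_compact C_ge1.
have C_ge0 : 0 <= C by rewrite (le_trans _ C_ge1).
apply/seteqP; split=> w /=; rewrite /supnorm_on => w_bound.
  move=> a Aa; apply: clConv_le_mul_sup (Acst 0) C_ge1 w_bound Aa _ _ => x.
    by move=> _; exact: ler_norm.
  exact: normr_ge0.
apply: (Aconvex_hull_sub_clConv (Acst 0) AD (fun c a _ => AZ c a)).
apply: (Aconvex_hull_of_sup_dominated1 A_cont Acst AD K_compact).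
apply: (sup_dominated1 (@normr_ge0 _ R) (normr1 R) (@normrX R) (Acst 1) AM (C := C)).
move=> a Aa v a_le_v; rewrite ler_norml; apply/andP; split.
  rewrite lerNl -mulN1r; apply: le_mul_sup_EFin C_ge0 (w_bound _ (AZ (-1) _ Aa)) _.
  by move=> x Kx; rewrite normrM normrN1 mul1r a_le_v.
exact: le_mul_sup_EFin C_ge0 (w_bound _ Aa) a_le_v.
Qed.

Local Open Scope complex_scope.

Section ComplexModulus.
Variable R : realType.
Implicit Types z : cplx R.

Lemma cmod_ge0 z : 0 <= cmod z.
Proof. by case: z => a b; rewrite /cmod /= sqrtr_ge0. Qed.

Lemma cmod1 : cmod (1 : cplx R) = 1.
Proof. exact: ComplexField.Normc.normc1. Qed.

Lemma cmodM z1 z2 : cmod (z1 * z2) = cmod z1 * cmod z2.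
Proof. exact: ComplexField.Normc.normcM. Qed.

Lemma cmodX n z : cmod (z ^+ n) = cmod z ^+ n.
Proof. by elim: n => [|n IHn]; rewrite ?expr0 ?cmod1 // !exprS cmodM IHn. Qed.

Lemma cmod_sqr z : cmod z ^+ 2 = complex.Re z ^+ 2 + complex.Im z ^+ 2.
Proof. by case: z => a b; rewrite /cmod /= sqr_sqrtr ?addr_ge0 ?sqr_ge0. Qed.

Lemma Re_le_cmod z : `|complex.Re z| <= cmod z.
Proof.
case: z => a b; rewrite /cmod /= -sqrtr_sqr ler_wsqrtr //.
by rewrite lerDl sqr_ge0.
Qed.

Lemma cmod_rotation z : exists c, cmod c = 1 /\ complex.Re (c * z) = cmod z.
Proof.
have [->|z_neq0] := eqVneq z 0.
  by exists 1; rewrite cmod1 mul1r /cmod ComplexField.Normc.normc0.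
have z_gt0 : 0 < cmod z.
  rewrite lt_neqAle cmod_ge0 andbT eq_sym.
  by apply: contraNneq z_neq0 => /ComplexField.Normc.eq0_normc ->.
(* [c] is the conjugate of [z] divided by its modulus. *)
exists ((complex.Re z / cmod z) +i* (- (complex.Im z / cmod z))).
have z2 := cmod_sqr z; move: z z2 z_gt0 {z_neq0} => [a b] /= z2 z_gt0; split.
  rewrite /cmod /= sqrrN !expr_div_n -mulrDl z2 divff ?sqrtr1 //.
  by rewrite -z2 sqrf_eq0 gt_eqF.
rewrite /cmod /=; move: z2 z_gt0; set n := Num.sqrt _ => z2 n_gt0; clearbody n.
have -> : a / n * a - - (b / n) * b = (a ^+ 2 + b ^+ 2) / n.
  by rewrite !expr2; field; rewrite gt_eqF.
by rewrite -z2 expr2 mulfK // gt_eqF.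
Qed.

Lemma normc_cmod z : `|z| = (cmod z)%:C.
Proof. by rewrite normc_def; case: z. Qed.

Lemma continuous_cmod : continuous (@cmod R).
Proof.
move=> z; apply/(@cvgrPdist_lt _ R _ _ (@nbhs_filter (cplx R) z)) => e e_gt0.
have : \forall y \near z, `|z - y| < e%:C.
  apply: (@cvgrPdist_lt _ (cplx R) _ _ (@nbhs_filter (cplx R) z) id z).1 => //.
  by rewrite ltcR.
apply: filterS => y; rewrite normc_cmod ltcR.
exact: le_lt_trans (ler_dist_dist (z : Rcomplex R) y).
Qed.

End ComplexModulus.

Section ComplexAlgebra.
Variables (R : realType) (T : topologicalType) (B : set (T -> cplx R)).
Hypotheses (B_cont : forall b, B b -> continuous b)
  (Bcst : forall c : cplx R, B (fun _ => c))
  (BD : forall a b, B a -> B b -> B (fun x => a x + b x))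
  (BM : forall a b, B a -> B b -> B (fun x => a x * b x))
  (BZ : forall (c : cplx R) a, B a -> B (fun x => c * a x)).

Lemma real_parts_cst (c : R) : real_parts B (fun _ => c).
Proof. by exists (fun _ => c%:C). Qed.

Lemma real_parts_add a1 a2 : real_parts B a1 -> real_parts B a2 ->
  real_parts B (fun x => a1 x + a2 x).
Proof.
move=> [b1 Bb1 <-] [b2 Bb2 <-]; exists (fun x => b1 x + b2 x); first exact: BD.
by apply/funext => x; case: (b1 x) (b2 x) => ? ? [].
Qed.

Lemma real_parts_scale (c : R) a : real_parts B a -> real_parts B (fun x => c * a x).
Proof.
move=> [b Bb <-]; exists (fun x => c%:C * b x); first exact: BZ.
by apply/funext => x; case: (b x) => ? ? /=; rewrite mul0r subr0.
Qed.

Lemma Aconvex_hull_real_parts (K : set T) w : compact K ->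
  sup_dominated (@cmod R) B K 1 w -> Aconvex_hull (real_parts B) K w.
Proof.
move=> K_compact dom _ [b Bb <-] u Re_le_u /=.
have [M b_le_M] : exists M, forall x, K x -> `|cmod (b x)| <= M.
  apply: continuous_bounded_on_compact K_compact => x.
  by apply: (continuous_comp (f := b)); [exact: B_cont | exact: continuous_cmod].
have shift t : 0 < t -> 2 * t * (complex.Re (b w) - u) <= M ^+ 2.
  move=> t_gt0; pose c x := b x + t%:C.
  have Bc2 : B (fun x => c x * c x) by apply: BM; apply: BD Bb (Bcst _).
  have cmod_c2 x : cmod (c x * c x) =
      cmod (b x) ^+ 2 + 2 * t * complex.Re (b x) + t ^+ 2.
    rewrite cmodM -expr2 !cmod_sqr /c; case: (b x) => p q /=; rewrite addr0; ring.
  have bound x : K x -> cmod (c x * c x) <= M ^+ 2 + 2 * t * u + t ^+ 2.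
    move=> Kx; rewrite cmod_c2.
    have := b_le_M _ Kx; rewrite ger0_norm ?cmod_ge0 // => cmod_le_M.
    have : cmod (b x) ^+ 2 <= M ^+ 2.
      by rewrite lerXn2r ?nnegrE ?cmod_ge0 // (le_trans (cmod_ge0 (b x))).
    have : t * complex.Re (b x) <= t * u.
      by apply: ler_wpM2l; [exact: ltW | exact: Re_le_u].
    lra.
  have := dom _ Bc2 _ bound; rewrite mul1r cmod_c2.
  have := sqr_ge0 (cmod (b w)); nra.
rewrite leNgt; apply/negP => u_lt_Re.
set d := complex.Re (b w) - u in shift; have d_gt0 : 0 < d by rewrite subr_gt0.
have t_gt0 : 0 < M ^+ 2 / d + 1 by rewrite ltr_wpDl ?divr_ge0 ?sqr_ge0 ?ltW.
have td : (M ^+ 2 / d + 1) * d = M ^+ 2 + d by rewrite mulrDl mul1r divfK ?gt_eqF.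
have := shift _ t_gt0; rewrite -mulrA td; have := sqr_ge0 M; lra.
Qed.

Lemma real_parts_rotation b w : B b -> exists a,
  [/\ real_parts B a, a w = cmod (b w) & forall x, `|a x| <= cmod (b x)].
Proof.
move=> Bb; have [c [cmod_c Re_cbw]] := cmod_rotation (b w).
exists (fun x => complex.Re (c * b x)); split=> // [|x].
  by exists (fun x => c * b x) => //; exact: BZ.
by rewrite -[cmod (b x)]mul1r -cmod_c -cmodM Re_le_cmod.
Qed.

Lemma sup_dominated_cmod (K : set T) (C : R) w :
  (forall a, real_parts B a ->
     forall v, (forall x, K x -> `|a x| <= v) -> a w <= C * v) ->
  sup_dominated (@cmod R) B K C w.
Proof.
move=> Re_dom b Bb v b_le_v; have [a [Ba <- a_le_b]] := real_parts_rotation w Bb.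
by apply: Re_dom Ba _ _ => x Kx; apply: le_trans (a_le_b x) (b_le_v x Kx).
Qed.

End ComplexAlgebra.

Local Close Scope complex_scope.

Lemma clConv_complex_function_algebra (R : realType) (T : topologicalType)
    (B : set (T -> cplx R)) :
  closed_complex_function_algebra B ->
  forall (K : set T) (C : R), compact K -> 1 <= C ->
    clConv (complete_lattice_cone (real_parts B)) K =
    [set w | forall a, real_parts B a -> ((a w)%:E <= C%:E * supnorm_on K a)%E]
  /\
    clConv (complete_lattice_cone (real_parts B)) K =
    [set w | forall b, B b -> ((cmod (b w))%:E <= C%:E * csupnorm_on K b)%E].
Proof.
move=> [B_cont [Bcst [BD [BM [BZ _]]]]] K C K_compact C_ge1.
have C_ge0 : 0 <= C by rewrite (le_trans _ C_ge1).
have RB0 := real_parts_cst Bcst 0.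
have dominated_clConv w : sup_dominated (@cmod R) B K C w ->
    clConv (complete_lattice_cone (real_parts B)) K w.
  move=> dom; apply: (Aconvex_hull_sub_clConv RB0 (real_parts_add BD)
    (fun c a _ => real_parts_scale BZ c (a:=a))).
  apply: (Aconvex_hull_real_parts B_cont Bcst BD BM K_compact).
  exact: (sup_dominated1 (@cmod_ge0 R) (cmod1 R) (@cmodX R) (Bcst 1) BM dom).
rewrite /supnorm_on /csupnorm_on; split; apply/seteqP; split=> w /= w_bound.
- move=> a Ba; apply: clConv_le_mul_sup RB0 C_ge1 w_bound Ba _ _ => x.
    by move=> _; exact: ler_norm.
  exact: normr_ge0.
- apply/dominated_clConv/sup_dominated_cmod => // a Ba v a_le_v.
  exact: le_mul_sup_EFin C_ge0 (w_bound _ Ba) a_le_v.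
- move=> b Bb; have [a [Ba <- a_le_b]] := real_parts_rotation BZ w Bb.
  apply: clConv_le_mul_sup RB0 C_ge1 w_bound Ba _ _ => x.
    by move=> _; apply: le_trans (ler_norm _) (a_le_b x).
  exact: cmod_ge0.
- apply: dominated_clConv => b Bb v b_le_v.
  exact: le_mul_sup_EFin C_ge0 (w_bound _ Bb) b_le_v.
Qed.

Theorem mainTheorem10 (R : realType) (Omega : topologicalType) :
  (* case (a) *)
  (forall A : set (Omega -> R), closed_real_function_algebra A ->
     forall (K : set Omega) (C : R), compact K -> 1 <= C ->
       clConv (complete_lattice_cone A) K =
       [set w | forall a, A a -> ((a w)%:E <= C%:E * supnorm_on K a)%E])
  /\
  (* case (b) *)
  (forall B : set (Omega -> cplx R), closed_complex_function_algebra B ->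
     forall (K : set Omega) (C : R), compact K -> 1 <= C ->
       clConv (complete_lattice_cone (real_parts B)) K =
       [set w | forall a, real_parts B a -> ((a w)%:E <= C%:E * supnorm_on K a)%E]
     /\
       clConv (complete_lattice_cone (real_parts B)) K =
       [set w | forall b, B b -> ((cmod (b w))%:E <= C%:E * csupnorm_on K b)%E]).
Proof.
split; [exact: clConv_real_function_algebra | exact: clConv_complex_function_algebra].
Qed.
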